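(* Let $G$ be a finite graph obtained by the following growth process. Start from a complete graph $K_{n_0}$ with $n_0\ge 2$ (the initial simplex). At each step, choose an integer $n\ge 2$, choose one of the previously added simplexes $\sigma$ (each simplex being the vertex set of a complete subgraph added at an earlier step, or the initial one), and choose a nonempty subset $S\subseteq\sigma$ with $1\le |S|\le n-1$ (a face of $\sigma$). Then add $n-|S|$ new vertices to the graph, and add edges so that $S$ together with the new vertices induces a complete graph $K_n$; this $K_n$ is recorded as a newly added simplex. No other edges are added. Then $G$ is connected and $\delta(G)\le 1$, i.e. for every four vertices $A,B,C,D$ of $G$ labelled so that $d(A,B)+d(C,D)\le d(A,C)+d(B,D)\le d(A,D)+d(B,C)$ one has $$\frac{\big(d(A,D)+d(B,C)\big)-\big(d(A,C)+d(B,D)\big)}{2}\le 1 .$$ In particular this holds regardless of whether some edges of the attached simplexes are marked as ''defect'' edges (the marking only changes which faces may be chosen, not the resulting graph).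
   Context: $d(U,V)$ denotes the shortest-path (graph) distance between vertices $U,V$ of $G$. The (Gromov four-point) hyperbolicity parameter $\delta(G)$ of a connected graph $G$ is the maximum, over all quadruples of vertices $A,B,C,D$, of $(\mathcal L-\mathcal M)/2$, where $\mathcal L$ is the largest and $\mathcal M$ the middle of the three sums $d(A,B)+d(C,D)$, $d(A,C)+d(B,D)$, $d(A,D)+d(B,C)$. A simplex of order $q_{max}=n-1$ is a complete graph on $n$ vertices; a face of order $q$ of a simplex is a complete subgraph on $q+1$ of its vertices. *)

From Stdlib Require Import Arith List Lia.
Import ListNotations.

(* A graph: number of vertices N (vertices are 0..N-1) and an edge relation. *)
Definition graph_rel := nat -> nat -> Prop.

Definition clique_rel (s : list nat) : graph_rel :=
  fun u v => In u s /\ In v s /\ u <> v.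

(* [grown N E Ss] : the graph with vertices 0..N-1 and edge relation E is
   obtained by the growth process, and Ss is the list of all simplexes
   (vertex sets of the added complete subgraphs) added so far, including
   the initial one. *)
Inductive grown : nat -> graph_rel -> list (list nat) -> Prop :=
| grown_init (n0 : nat) :
    2 <= n0 ->
    grown n0 (clique_rel (seq 0 n0)) [seq 0 n0]
| grown_step (N : nat) (E : graph_rel) (Ss : list (list nat))
    (sigma S : list nat) (n : nat) :
    grown N E Ss ->
    2 <= n ->
    In sigma Ss ->
    incl S sigma -> NoDup S ->
    1 <= length S -> length S <= n - 1 ->
    grown (N + (n - length S))
          (fun u v => E u v \/ clique_rel (S ++ seq N (n - length S)) u v)
          ((S ++ seq N (n - length S)) :: Ss).

Inductive walk (E : graph_rel) : nat -> nat -> nat -> Prop :=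
| walk0 (u : nat) : walk E u u 0
| walkS (u w v k : nat) : E u w -> walk E w v k -> walk E u v (S k).

Definition is_dist (E : graph_rel) (u v d : nat) : Prop :=
  walk E u v d /\ forall m, walk E u v m -> d <= m.

(* Distances are tracked between cliques rather than single vertices, and the
   four-point condition is proved for cliques by induction along the growth.
   When new vertices Q are glued onto a clique S of the old graph, a new vertex
   lies at distance exactly 1 + d(S, v) from every old vertex v.  Hence a clique
   K of the new graph behaves like a clique K° of the old graph shifted by t:
   its old part with t = 0, or S with t = 1 when K consists of new vertices
   only.  Then d'(K, K') = d(K°, K'°) + t + t' whenever one of K, K' has no new
   vertex; if this holds for all six pairs, delta <= 1 is inherited from the old
   graph, since the shifts add the same amount to all three sums.
   Two cliques that both contain new vertices are adjacent vertex by vertex, so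
   their distances to any other clique differ by at most 1, which already
   forces delta <= 1. *)

From Stdlib Require Import Arith List Lia Classical Wf_nat.
Import ListNotations.

Lemma walk_cat E u w v k1 k2 : walk E u w k1 -> walk E w v k2 -> walk E u v (k1 + k2).
Proof. induction 1; intros; simpl; [assumption | econstructor; eauto]. Qed.

Lemma walk_edge (E : graph_rel) u v : E u v -> walk E u v 1.
Proof. intros; econstructor; [eassumption | constructor]. Qed.

Lemma walk_sym (E : graph_rel) u v k :
  (forall a b, E a b -> E b a) -> walk E u v k -> walk E v u k.
Proof.
  intros Hsym H; induction H; [constructor |].
  rewrite <- Nat.add_1_r. eapply walk_cat; eauto using walk_edge.
Qed.

Lemma walk_mono (E F : graph_rel) u v k :
  (forall a b, E a b -> F a b) -> walk E u v k -> walk F u v k.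
Proof. intros HF H; induction H; econstructor; eauto. Qed.

Definition set_dist (E : graph_rel) (A B : list nat) (d : nat) : Prop :=
  (exists a b, In a A /\ In b B /\ walk E a b d) /\
  (forall a b k, In a A -> In b B -> walk E a b k -> d <= k).

Lemma set_dist_unique E A B d1 d2 : set_dist E A B d1 -> set_dist E A B d2 -> d1 = d2.
Proof.
  intros [(a & b & Ha & Hb & Hw) H1] [(a' & b' & Ha' & Hb' & Hw') H2].
  specialize (H1 _ _ _ Ha' Hb' Hw'). specialize (H2 _ _ _ Ha Hb Hw). lia.
Qed.

Lemma set_dist_sym E A B d :
  (forall a b, E a b -> E b a) -> set_dist E A B d -> set_dist E B A d.
Proof.
  intros Hsym [(a & b & Ha & Hb & Hw) Hmin]; split.
  - exists b, a; auto using walk_sym.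
  - intros x y k Hx Hy Hk; apply (Hmin y x); auto using walk_sym.
Qed.

Lemma set_dist_exists E A B a b k :
  In a A -> In b B -> walk E a b k -> exists d, set_dist E A B d.
Proof.
  intros Ha Hb Hk.
  set (P := fun d => exists a b, In a A /\ In b B /\ walk E a b d).
  destruct (dec_inh_nat_subset_has_unique_least_element P (fun d => classic (P d)))
    as (d & (Pd & Hmin) & _); [exists k, a, b; auto |].
  exists d; split; [exact Pd |].
  intros x y k' Hx Hy Hw; apply Hmin; exists x, y; auto.
Qed.

Definition is_clique (N : nat) (E : graph_rel) (K : list nat) : Prop :=
  K <> [] /\ (forall u, In u K -> u < N) /\
  (forall u v, In u K -> In v K -> u <> v -> E u v).

Definition connected (N : nat) (E : graph_rel) : Prop :=
  forall u v, u < N -> v < N -> exists k, walk E u v k.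

Definition near (E : graph_rel) (A B : list nat) : Prop :=
  forall b, In b B -> exists a, In a A /\ (a = b \/ E a b).

Lemma set_dist_near E A B C dA dB :
  near E A B -> set_dist E B C dB -> set_dist E A C dA -> dA <= dB + 1.
Proof.
  intros Hnear [(b & c & Hb & Hc & Hw) _] [_ Hmin].
  destruct (Hnear b Hb) as (a & Ha & [<- | Hab]).
  - specialize (Hmin _ _ _ Ha Hc Hw); lia.
  - rewrite Nat.add_comm. apply (Hmin a c); auto.
    exact (walk_cat _ _ _ _ _ _ (walk_edge _ _ _ Hab) Hw).
Qed.

Lemma set_dist_near_le1 E A B d : near E A B -> B <> [] -> set_dist E A B d -> d <= 1.
Proof.
  intros Hnear HB [_ Hmin]. destruct B as [| b B]; [congruence |].
  destruct (Hnear b (or_introl eq_refl)) as (a & Ha & [<- | Hab]).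
  - specialize (Hmin a a 0 Ha (or_introl eq_refl) (walk0 _ _)); lia.
  - exact (Hmin a b 1 Ha (or_introl eq_refl) (walk_edge _ _ _ Hab)).
Qed.

Lemma set_dist_triangle N E A B C x y z :
  is_clique N E B -> set_dist E A B x -> set_dist E B C y -> set_dist E A C z ->
  z <= x + y + 1.
Proof.
  intros (_ & _ & HB) [(a & b & Ha & Hb & Hw1) _] [(b' & c & Hb' & Hc & Hw2) _] [_ Hmin].
  destruct (Nat.eq_dec b b') as [<- | Hne].
  - specialize (Hmin a c _ Ha Hc (walk_cat _ _ _ _ _ _ Hw1 Hw2)); lia.
  - assert (Hw : walk E a c (x + (1 + y))).
    { eapply walk_cat; [eauto |]. eapply walk_cat; [apply walk_edge |]; eauto. }
    specialize (Hmin a c _ Ha Hc Hw); lia.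
Qed.

(* The four-point condition delta <= 1 on the three pair sums: the largest one
   exceeds the middle one by at most 2. *)
Definition delta_le1 (s1 s2 s3 : nat) : Prop :=
  (s1 <= s2 + 2 \/ s1 <= s3 + 2) /\ (s2 <= s1 + 2 \/ s2 <= s3 + 2) /\
  (s3 <= s1 + 2 \/ s3 <= s2 + 2).

Definition four_point_cliques (N : nat) (E : graph_rel) : Prop :=
  forall K1 K2 K3 K4 d12 d13 d14 d23 d24 d34,
  is_clique N E K1 -> is_clique N E K2 -> is_clique N E K3 -> is_clique N E K4 ->
  set_dist E K1 K2 d12 -> set_dist E K1 K3 d13 -> set_dist E K1 K4 d14 ->
  set_dist E K2 K3 d23 -> set_dist E K2 K4 d24 -> set_dist E K3 K4 d34 ->
  delta_le1 (d12 + d34) (d13 + d24) (d14 + d23).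

(* Distances from [K1] and from [K2] to [K3], [K4] differ by at most one, so the
   sums [d13 + d24] and [d14 + d23] are within 2, and [d12 + d34] is bounded
   through the cliques [K1] and [K2]. *)
Lemma near_pair_four_point N E K1 K2 K3 K4 d12 d13 d14 d23 d24 d34 :
  (forall a b, E a b -> E b a) ->
  is_clique N E K1 -> is_clique N E K2 -> near E K1 K2 -> near E K2 K1 ->
  set_dist E K1 K2 d12 -> set_dist E K1 K3 d13 -> set_dist E K1 K4 d14 ->
  set_dist E K2 K3 d23 -> set_dist E K2 K4 d24 -> set_dist E K3 K4 d34 ->
  delta_le1 (d12 + d34) (d13 + d24) (d14 + d23).
Proof.
  intros Hsym C1 C2 N12 N21 H12 H13 H14 H23 H24 H34.
  pose proof (set_dist_near_le1 _ _ _ _ N12 (proj1 C2) H12).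
  pose proof (set_dist_near _ _ _ _ _ _ N12 H23 H13).
  pose proof (set_dist_near _ _ _ _ _ _ N21 H13 H23).
  pose proof (set_dist_near _ _ _ _ _ _ N12 H24 H14).
  pose proof (set_dist_near _ _ _ _ _ _ N21 H14 H24).
  pose proof (set_dist_triangle _ _ _ _ _ _ _ _ C1 (set_dist_sym _ _ _ _ Hsym H13) H14 H34).
  pose proof (set_dist_triangle _ _ _ _ _ _ _ _ C2 (set_dist_sym _ _ _ _ Hsym H23) H24 H34).
  unfold delta_le1; lia.
Qed.

Definition glue (E : graph_rel) (S : list nat) (N m : nat) : graph_rel :=
  fun u v => E u v \/ clique_rel (S ++ seq N m) u v.

Definition has_new (N : nat) (K : list nat) : Prop := exists q, In q K /\ N <= q.

Definition old_part (N : nat) (K : list nat) : list nat := filter (fun v => v <? N) K.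

(* A clique of the glued graph is represented in the old graph by its old part,
   or by [S] at the cost of one extra step when all its vertices are new. *)
Definition shadow (N : nat) (S K : list nat) : list nat :=
  match old_part N K with [] => S | Ko => Ko end.

Definition lift (N : nat) (K : list nat) : nat :=
  match old_part N K with [] => 1 | _ => 0 end.

Lemma in_old_part N K u : In u (old_part N K) <-> In u K /\ u < N.
Proof. unfold old_part; rewrite filter_In, Nat.ltb_lt; tauto. Qed.

Lemma old_part_nil N K : old_part N K = [] -> forall u, In u K -> N <= u.
Proof.
  intros Ho u Hu. destruct (le_lt_dec N u) as [| Hlt]; [assumption |].
  assert (Hin : In u (old_part N K)) by (apply in_old_part; auto).
  rewrite Ho in Hin; destruct Hin.
Qed.

Lemma not_has_new N K : ~ has_new N K -> forall u, In u K -> u < N.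
Proof. intros Hold u Hu. apply Nat.nle_gt; intro; apply Hold; exists u; auto. Qed.

Lemma shadow_lift_of_old N S K :
  K <> [] -> ~ has_new N K -> shadow N S K = K /\ lift N K = 0.
Proof.
  intros HK Hold.
  assert (Ho : old_part N K = K).
  { apply forallb_filter_id, forallb_forall. intros u Hu.
    apply Nat.ltb_lt; exact (not_has_new N K Hold u Hu). }
  unfold shadow, lift; rewrite Ho. destruct K; [congruence | auto].
Qed.

Section Gluing.

Variables (N m : nat) (E : graph_rel) (S : list nat).
Hypothesis E_sym : forall u v, E u v -> E v u.
Hypothesis E_range : forall u v, E u v -> u < N /\ v < N.
Hypothesis S_clique : is_clique N E S.

Let E' := glue E S N m.

Lemma in_block u : In u (S ++ seq N m) <-> In u S \/ (N <= u /\ u < N + m).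
Proof. rewrite in_app_iff, in_seq; tauto. Qed.

Lemma in_block_old u : In u (S ++ seq N m) -> u < N -> In u S.
Proof. rewrite in_block; intros [| ] ?; [assumption | lia]. Qed.

Lemma glue_sym u v : E' u v -> E' v u.
Proof. intros [H | (? & ? & ?)]; [left; auto | right; repeat split; auto]. Qed.

Lemma glue_old u v : u < N -> v < N -> E' u v -> E u v.
Proof.
  intros Hu Hv [H | (Hu' & Hv' & Hne)]; [assumption |].
  apply (proj2 (proj2 S_clique)); auto using in_block_old.
Qed.

Lemma walk_glue_to_old u v k : walk E' u v k -> v < N ->
  (u < N -> exists k', k' <= k /\ walk E u v k') /\
  (N <= u -> exists s k', In s S /\ k' < k /\ walk E s v k').
Proof.
  induction 1 as [u | u w v k Huw Hw IH]; intros Hv.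
  - split; intros; [exists 0; split; [lia | constructor] | lia].
  - destruct (IH Hv) as [IHold IHnew].
    destruct Huw as [Huw | (Hu & Hw' & Hne)].
    + destruct (E_range _ _ Huw) as [Hu Hwlt]. split; intros; [| lia].
      destruct (IHold Hwlt) as (k' & ? & ?).
      exists (1 + k'); split; [lia | econstructor; eauto].
    + destruct (lt_dec w N) as [Hwlt | Hwnew].
      * destruct (IHold Hwlt) as (k' & ? & ?).
        split; intros Hu'.
        -- exists (1 + k'); split; [lia |]. econstructor; [| eassumption].
           apply (proj2 (proj2 S_clique)); auto using in_block_old.
        -- exists w, k'; repeat split; auto using in_block_old; lia.
      * destruct (IHnew ltac:(lia)) as (s & k' & Hs & ? & ?).
        split; intros Hu'.
        -- destruct (Nat.eq_dec u s) as [<- | Hus].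
           ++ exists k'; split; [lia | assumption].
           ++ exists (1 + k'); split; [lia |]. econstructor; [| eassumption].
              apply (proj2 (proj2 S_clique)); auto using in_block_old.
        -- exists s, k'; repeat split; auto; lia.
Qed.

Lemma clique_glue_in_block K q :
  is_clique (N + m) E' K -> In q K -> N <= q -> forall u, In u K -> In u (S ++ seq N m).
Proof.
  intros (_ & HKlt & HK) Hq Hqn u Hu.
  destruct (Nat.eq_dec q u) as [<- | Hne].
  - apply in_block; right; split; [| apply HKlt]; auto.
  - destruct (HK q u Hq Hu Hne) as [Hqu | (_ & Hb & _)]; [| assumption].
    destruct (E_range _ _ Hqu); lia.
Qed.

Lemma shadow_clique K : is_clique (N + m) E' K -> is_clique N E (shadow N S K).
Proof.
  intros (HK & HKlt & HKe). unfold shadow.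
  destruct (old_part N K) as [| a l] eqn:Ho; [exact S_clique |].
  rewrite <- Ho. split; [rewrite Ho; discriminate |].
  split; [intros u Hu; apply in_old_part in Hu; tauto |].
  intros u v Hu Hv Hne; apply in_old_part in Hu, Hv.
  apply glue_old; try tauto. apply HKe; tauto.
Qed.

Lemma shadow_walk K a0 : is_clique (N + m) E' K -> In a0 (shadow N S K) ->
  exists a, In a K /\ walk E' a0 a (lift N K).
Proof.
  intros (HK & HKlt & _). unfold shadow, lift.
  destruct (old_part N K) as [| a1 l] eqn:Ho; intros Ha0.
  - destruct K as [| a K]; [congruence |]. exists a; split; [now left |].
    pose proof (old_part_nil _ _ Ho a (or_introl eq_refl)).
    pose proof (HKlt a (or_introl eq_refl)).
    pose proof (proj1 (proj2 S_clique) a0 Ha0).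
    apply walk_edge; right; repeat split; rewrite ?in_block; auto; lia.
  - rewrite <- Ho in Ha0; apply in_old_part in Ha0.
    exists a0; split; [tauto | constructor].
Qed.

Lemma walk_to_shadow K a v k : is_clique (N + m) E' K -> In a K -> v < N ->
  walk E' a v k -> exists a0 k', In a0 (shadow N S K) /\ k' + lift N K <= k /\ walk E a0 v k'.
Proof.
  intros HK Ha Hv Hw. destruct (walk_glue_to_old _ _ _ Hw Hv) as [Hold Hnew].
  unfold shadow, lift. destruct (old_part N K) as [| a1 l] eqn:Ho.
  - destruct (Hnew (old_part_nil _ _ Ho a Ha)) as (s & k' & Hs & ? & ?).
    exists s, k'; repeat split; auto; lia.
  - destruct (lt_dec a N) as [Halt | Hanew].
    + destruct (Hold Halt) as (k' & ? & ?). exists a, k'.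
      rewrite <- Ho, in_old_part; repeat split; auto; lia.
    + destruct (Hnew ltac:(lia)) as (s & k' & Hs & ? & ?).
      assert (Ha1 : In a1 K /\ a1 < N) by (apply in_old_part; rewrite Ho; now left).
      assert (Ha1S : In a1 S).
      { apply in_block_old; [| tauto]. apply (clique_glue_in_block K a); auto; [lia | tauto]. }
      exists a1. destruct (Nat.eq_dec a1 s) as [<- | Hne].
      * exists k'; repeat split; [now left | lia | assumption].
      * exists (1 + k'); repeat split; [now left | lia |].
        econstructor; [| eassumption]. apply (proj2 (proj2 S_clique)); auto.
Qed.

Lemma set_dist_glue_old K K' b : (forall u, In u K -> u < N) -> is_clique (N + m) E' K' ->
  set_dist E K (shadow N S K') b -> set_dist E' K K' (b + lift N K').
Proof.
  intros HKlt HK' [(a & a0 & Ha & Ha0 & Hw) Hmin]. split.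
  - destruct (shadow_walk K' a0 HK' Ha0) as (a' & Ha' & Hw').
    exists a, a'; repeat split; auto.
    apply (walk_cat _ _ a0); [| assumption]. apply (walk_mono E); [left; auto | assumption].
  - intros x c k Hx Hc Hk.
    apply (walk_sym _ _ _ _ glue_sym) in Hk.
    destruct (walk_to_shadow K' c x k HK' Hc (HKlt x Hx) Hk) as (y & k' & Hy & ? & Hy').
    specialize (Hmin x y k' Hx Hy (walk_sym _ _ _ _ E_sym Hy')). lia.
Qed.

Lemma set_dist_glue K K' b : is_clique (N + m) E' K -> is_clique (N + m) E' K' ->
  ~ (has_new N K /\ has_new N K') ->
  set_dist E (shadow N S K) (shadow N S K') b -> set_dist E' K K' (b + lift N K + lift N K').
Proof.
  intros HK HK' Hnew Hb.
  destruct (not_and_or _ _ Hnew) as [Hold | Hold].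
  - destruct (shadow_lift_of_old N S K (proj1 HK) Hold) as [Hs ->].
    rewrite Hs, Nat.add_0_r in *. exact (set_dist_glue_old K K' b (not_has_new N K Hold) HK' Hb).
  - destruct (shadow_lift_of_old N S K' (proj1 HK') Hold) as [Hs ->].
    rewrite Hs, Nat.add_0_r in *. apply set_dist_sym; [exact glue_sym |].
    exact (set_dist_glue_old K' K b (not_has_new N K' Hold) HK (set_dist_sym _ _ _ _ E_sym Hb)).
Qed.

Lemma near_glue_new K K' : is_clique (N + m) E' K -> is_clique (N + m) E' K' ->
  has_new N K -> has_new N K' -> near E' K K'.
Proof.
  intros HK HK' (q & Hq & Hqn) (q' & Hq' & Hq'n) b Hb. exists q; split; [assumption |].
  destruct (Nat.eq_dec q b) as [| Hne]; [now left |].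
  right; right; repeat split; auto.
  - exact (clique_glue_in_block K q HK Hq Hqn q Hq).
  - exact (clique_glue_in_block K' q' HK' Hq' Hq'n b Hb).
Qed.

Lemma glue_dist_shadow K K' d : connected N E ->
  is_clique (N + m) E' K -> is_clique (N + m) E' K' -> ~ (has_new N K /\ has_new N K') ->
  set_dist E' K K' d ->
  exists b, set_dist E (shadow N S K) (shadow N S K') b /\ d = b + lift N K + lift N K'.
Proof.
  intros Hconn HK HK' Hnew Hd.
  destruct (shadow_clique K HK) as (Hne & Hlt & _).
  destruct (shadow_clique K' HK') as (Hne' & Hlt' & _).
  destruct (shadow N S K) as [| a A] eqn:Hs; [congruence |].
  destruct (shadow N S K') as [| a' A'] eqn:Hs'; [congruence |].
  destruct (Hconn a a' (Hlt a (or_introl eq_refl)) (Hlt' a' (or_introl eq_refl))) as [k Hk].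
  destruct (set_dist_exists E (a :: A) (a' :: A') a a' k (or_introl eq_refl) (or_introl eq_refl) Hk) as [b Hb].
  exists b; split; [assumption |].
  apply (set_dist_unique E' K K'); [assumption |].
  apply set_dist_glue; rewrite ?Hs, ?Hs'; assumption.
Qed.

Lemma glue_connected : connected N E -> connected (N + m) E'.
Proof.
  intros Hconn. destruct S_clique as (HS & HSlt & _).
  assert (exists s0, In s0 S) as [s0 Hs0]
    by (destruct S as [| s0 ?]; [congruence | exists s0; now left]).
  assert (to_s0 : forall u, u < N + m -> exists k, walk E' u s0 k).
  { intros u Hu. destruct (lt_dec u N) as [Hold | Hnew].
    - destruct (Hconn u s0 Hold (HSlt s0 Hs0)) as [k Hk].
      exists k; apply (walk_mono E); [left; auto | assumption].
    - pose proof (HSlt s0 Hs0).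
      exists 1; apply walk_edge; right; repeat split; rewrite ?in_block; auto; lia. }
  intros u v Hu Hv.
  destruct (to_s0 u Hu) as [k1 H1], (to_s0 v Hv) as [k2 H2].
  exists (k1 + k2). apply (walk_cat _ _ s0); [assumption |].
  exact (walk_sym _ _ _ _ glue_sym H2).
Qed.

Lemma glue_new_pair_four_point K1 K2 K3 K4 d12 d13 d14 d23 d24 d34 :
  is_clique (N + m) E' K1 -> is_clique (N + m) E' K2 -> has_new N K1 -> has_new N K2 ->
  set_dist E' K1 K2 d12 -> set_dist E' K1 K3 d13 -> set_dist E' K1 K4 d14 ->
  set_dist E' K2 K3 d23 -> set_dist E' K2 K4 d24 -> set_dist E' K3 K4 d34 ->
  delta_le1 (d12 + d34) (d13 + d24) (d14 + d23).
Proof.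
  intros C1 C2 N1 N2.
  apply near_pair_four_point with (N := N + m); auto using glue_sym, near_glue_new.
Qed.

Lemma glue_four_point : connected N E -> four_point_cliques N E -> four_point_cliques (N + m) E'.
Proof.
  intros Hconn Hfp K1 K2 K3 K4 d12 d13 d14 d23 d24 d34 C1 C2 C3 C4 H12 H13 H14 H23 H24 H34.
  pose proof (set_dist_sym _ _ _ _ glue_sym H12) as H21.
  pose proof (set_dist_sym _ _ _ _ glue_sym H13) as H31.
  pose proof (set_dist_sym _ _ _ _ glue_sym H14) as H41.
  pose proof (set_dist_sym _ _ _ _ glue_sym H23) as H32.
  pose proof (set_dist_sym _ _ _ _ glue_sym H24) as H42.
  pose proof (set_dist_sym _ _ _ _ glue_sym H34) as H43.
  destruct (classic (has_new N K1 /\ has_new N K2)) as [[Ni Nj] | F12].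
  { exact (glue_new_pair_four_point K1 K2 K3 K4 _ _ _ _ _ _ C1 C2 Ni Nj H12 H13 H14 H23 H24 H34). }
  destruct (classic (has_new N K1 /\ has_new N K3)) as [[Ni Nj] | F13].
  { pose proof (glue_new_pair_four_point K1 K3 K2 K4 _ _ _ _ _ _ C1 C3 Ni Nj H13 H12 H14 H32 H34 H24).
    unfold delta_le1 in *; lia. }
  destruct (classic (has_new N K1 /\ has_new N K4)) as [[Ni Nj] | F14].
  { pose proof (glue_new_pair_four_point K1 K4 K2 K3 _ _ _ _ _ _ C1 C4 Ni Nj H14 H12 H13 H42 H43 H23).
    unfold delta_le1 in *; lia. }
  destruct (classic (has_new N K2 /\ has_new N K3)) as [[Ni Nj] | F23].
  { pose proof (glue_new_pair_four_point K2 K3 K1 K4 _ _ _ _ _ _ C2 C3 Ni Nj H23 H21 H24 H31 H34 H14).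
    unfold delta_le1 in *; lia. }
  destruct (classic (has_new N K2 /\ has_new N K4)) as [[Ni Nj] | F24].
  { pose proof (glue_new_pair_four_point K2 K4 K1 K3 _ _ _ _ _ _ C2 C4 Ni Nj H24 H21 H23 H41 H43 H13).
    unfold delta_le1 in *; lia. }
  destruct (classic (has_new N K3 /\ has_new N K4)) as [[Ni Nj] | F34].
  { pose proof (glue_new_pair_four_point K3 K4 K1 K2 _ _ _ _ _ _ C3 C4 Ni Nj H34 H31 H32 H41 H42 H12).
    unfold delta_le1 in *; lia. }
  destruct (glue_dist_shadow K1 K2 d12 Hconn C1 C2 F12 H12) as (b12 & B12 & ->).
  destruct (glue_dist_shadow K1 K3 d13 Hconn C1 C3 F13 H13) as (b13 & B13 & ->).
  destruct (glue_dist_shadow K1 K4 d14 Hconn C1 C4 F14 H14) as (b14 & B14 & ->).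
  destruct (glue_dist_shadow K2 K3 d23 Hconn C2 C3 F23 H23) as (b23 & B23 & ->).
  destruct (glue_dist_shadow K2 K4 d24 Hconn C2 C4 F24 H24) as (b24 & B24 & ->).
  destruct (glue_dist_shadow K3 K4 d34 Hconn C3 C4 F34 H34) as (b34 & B34 & ->).
  pose proof (Hfp _ _ _ _ _ _ _ _ _ _ (shadow_clique K1 C1) (shadow_clique K2 C2)
    (shadow_clique K3 C3) (shadow_clique K4 C4) B12 B13 B14 B23 B24 B34).
  unfold delta_le1 in *; lia.
Qed.

End Gluing.

Lemma is_clique_incl N E K K' : is_clique N E K -> incl K' K -> K' <> [] -> is_clique N E K'.
Proof. intros (_ & Hlt & HK) Hincl HK'; repeat split; auto. Qed.

Lemma is_clique_mono N N' (E E' : graph_rel) K :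
  N <= N' -> (forall u v, E u v -> E' u v) -> is_clique N E K -> is_clique N' E' K.
Proof. intros HN HE (HK & Hlt & Hcl); repeat split; auto. intros u Hu; specialize (Hlt u Hu); lia. Qed.

Definition grown_invariant (N : nat) (E : graph_rel) (Ss : list (list nat)) : Prop :=
  (forall u v, E u v -> E v u) /\ (forall u v, E u v -> u < N /\ v < N) /\
  (forall sg, In sg Ss -> is_clique N E sg) /\ connected N E /\ four_point_cliques N E.

Lemma complete_near n0 A B : A <> [] -> (forall u, In u A -> u < n0) ->
  (forall u, In u B -> u < n0) -> near (clique_rel (seq 0 n0)) A B.
Proof.
  intros HA HAlt HBlt b Hb. destruct A as [| a A]; [congruence |].
  exists a; split; [now left |].
  destruct (Nat.eq_dec a b) as [| Hne]; [now left | right].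
  pose proof (HAlt a (or_introl eq_refl)). pose proof (HBlt b Hb).
  repeat split; rewrite ?in_seq; auto; lia.
Qed.

Lemma grown_invariant_init n0 : 2 <= n0 -> grown_invariant n0 (clique_rel (seq 0 n0)) [seq 0 n0].
Proof.
  intros Hn0.
  assert (Hseq : forall u, In u (seq 0 n0) <-> u < n0) by (intro u; rewrite in_seq; lia).
  assert (Hdist : forall K K' d, is_clique n0 (clique_rel (seq 0 n0)) K ->
            is_clique n0 (clique_rel (seq 0 n0)) K' -> set_dist (clique_rel (seq 0 n0)) K K' d -> d <= 1).
  { intros K K' d (HK & HKlt & _) (HK' & HK'lt & _).
    apply set_dist_near_le1; auto using complete_near. }
  split; [| split; [| split; [| split]]].
  - intros u v (? & ? & ?); repeat split; auto.
  - intros u v (Hu & Hv & _); split; apply Hseq; assumption.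
  - intros sg [<- | []]. split; [| split].
    + destruct n0; [lia | discriminate].
    + intros u; apply Hseq.
    + intros u v Hu Hv Hne; repeat split; auto.
  - intros u v Hu Hv. destruct (Nat.eq_dec u v) as [<- | Hne]; [exists 0; constructor |].
    exists 1; apply walk_edge; repeat split; rewrite ?Hseq; auto.
  - intros K1 K2 K3 K4 d12 d13 d14 d23 d24 d34 C1 C2 C3 C4 H12 H13 H14 H23 H24 H34.
    pose proof (Hdist _ _ _ C1 C2 H12). pose proof (Hdist _ _ _ C1 C3 H13).
    pose proof (Hdist _ _ _ C1 C4 H14). pose proof (Hdist _ _ _ C2 C3 H23).
    pose proof (Hdist _ _ _ C2 C4 H24). pose proof (Hdist _ _ _ C3 C4 H34).
    unfold delta_le1; lia.
Qed.

Lemma grown_invariant_step N E Ss sigma S m :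
  grown_invariant N E Ss -> In sigma Ss -> incl S sigma -> S <> [] ->
  grown_invariant (N + m) (glue E S N m) ((S ++ seq N m) :: Ss).
Proof.
  intros (Hsym & Hrange & Hsimp & Hconn & Hfp) Hsigma Hincl HS.
  assert (HSc : is_clique N E S) by exact (is_clique_incl N E sigma S (Hsimp sigma Hsigma) Hincl HS).
  assert (Hblock : forall u, In u (S ++ seq N m) -> u < N + m).
  { intros u Hu; apply in_block in Hu as [Hu | Hu]; [specialize (proj1 (proj2 HSc) u Hu) |]; lia. }
  split; [| split; [| split; [| split]]].
  - exact (glue_sym N m E S Hsym).
  - intros u v [Huv | (Hu & Hv & _)]; [specialize (Hrange u v Huv); lia | auto].
  - intros sg [<- | Hsg].
    + split; [| split]; [destruct S; [congruence | discriminate] | exact Hblock |].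
      intros u v Hu Hv Hne; right; repeat split; auto.
    + apply (is_clique_mono N _ E); [lia | left; auto | auto].
  - exact (glue_connected N m E S Hsym HSc Hconn).
  - exact (glue_four_point N m E S Hsym Hrange HSc Hconn Hfp).
Qed.

Lemma grown_invariant_holds N E Ss : grown N E Ss -> grown_invariant N E Ss.
Proof.
  induction 1 as [n0 Hn0 | N E Ss sigma S n _ IH Hn Hsigma Hincl _ HS _].
  - exact (grown_invariant_init n0 Hn0).
  - apply grown_invariant_step with (sigma := sigma); auto.
    destruct S; simpl in HS; [lia | discriminate].
Qed.

Theorem mainTheorem1 (N : nat) (E : graph_rel) (Ss : list (list nat)) :
  grown N E Ss ->
  (* connected *)
  (forall u v, u < N -> v < N -> exists k, walk E u v k) /\
  (* four-point hyperbolicity delta(G) <= 1 *)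
  (forall A B C D dAB dCD dAC dBD dAD dBC,
      A < N -> B < N -> C < N -> D < N ->
      is_dist E A B dAB -> is_dist E C D dCD ->
      is_dist E A C dAC -> is_dist E B D dBD ->
      is_dist E A D dAD -> is_dist E B C dBC ->
      dAB + dCD <= dAC + dBD ->
      dAC + dBD <= dAD + dBC ->
      dAD + dBC <= dAC + dBD + 2).
Proof.
  intros Hgrown. destruct (grown_invariant_holds N E Ss Hgrown) as (_ & _ & _ & Hconn & Hfp).
  split; [exact Hconn |].
  assert (Hpoint : forall A, A < N -> is_clique N E [A]).
  { intros A HA; repeat split; [discriminate | |].
    - intros u [<- | []]; exact HA.
    - intros u v [<- | []] [<- | []] Hne; congruence. }
  assert (Hdist : forall A B d, is_dist E A B d -> set_dist E [A] [B] d).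
  { intros A B d [Hw Hmin]; split; [exists A, B; simpl; auto |].
    intros a b k [<- | []] [<- | []] Hk; auto. }
  intros A B C D dAB dCD dAC dBD dAD dBC HA HB HC HD HAB HCD HAC HBD HAD HBC Hle1 Hle2.
  pose proof (Hfp [A] [B] [C] [D] dAB dAC dAD dBC dBD dCD (Hpoint A HA) (Hpoint B HB)
    (Hpoint C HC) (Hpoint D HD) (Hdist _ _ _ HAB) (Hdist _ _ _ HAC) (Hdist _ _ _ HAD)
    (Hdist _ _ _ HBC) (Hdist _ _ _ HBD) (Hdist _ _ _ HCD)) as Hsums.
  unfold delta_le1 in Hsums; lia.
Qed.
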